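(* Let $h'_1,h'_2,l'_1,l'_2,\alpha'_1,\alpha'_2,\beta'\in\mathbb{C}$ and assume that $N:=(h'_1-h'_2-l'_1+l'_2+\alpha'_1-\alpha'_2+\beta'-2)/2$ is a non-negative integer and $\beta'\notin\{1,\dots,N\}$. Let $c_n(E')$ $(n=0,\dots,N)$ and $c(E')$ be the polynomials of the context constructed from the parameters $h''_1=l'_1,\ l''_1=h'_1,\ h''_2=h'_2,\ l''_2=l'_2,\ \alpha''_1=\alpha'_1,\ \alpha''_2=\alpha'_2,\ \beta''=\beta'$ (with this $N$), and let $E'_0$ satisfy $c(E'_0)=0$. Then the functions $$h_1(s)=s^{(h'_1+h'_2-l'_1-l'_2-\alpha'_1-\alpha'_2-\beta'+2)/2}\frac{(s/(q^{l'_1-1/2}t_1);q)_\infty}{(s/(q^{h'_1-1/2}t_1);q)_\infty}\sum_{n=0}^{N}c_n(E'_0)s^{n},$$ $$h_2(s)=s^{-\alpha'_2-N}\frac{(q^{h'_1+1/2}t_1/s;q)_\infty}{(q^{l'_1+1/2}t_1/s;q)_\infty}\sum_{n=0}^{N}c_n(E'_0)s^{n}$$ satisfy $A^{\langle4\rangle}(s;h'_1,h'_2,l'_1,l'_2,\alpha'_1,\alpha'_2,\beta')h_i(s)=E'_0h_i(s)$ for $i=1,2$.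
   Context: $q\in\mathbb{C}$ with $0<|q|<1$; powers $q^a$ via a fixed branch of $\log q$, and $s^{a}$ a fixed branch with $(qs)^a=q^as^a$. $(a;q)_\infty=\prod_{k\ge0}(1-aq^k)$, $(a;q)_n=(a;q)_\infty/(aq^n;q)_\infty$ for $n\in\mathbb{Z}$, $(a_1,\dots,a_m;q)_n=\prod_i(a_i;q)_n$. $t_1,t_2$ are fixed non-zero constants; $T_s^{\pm1}g(s)=g(q^{\pm1}s)$ and $A^{\langle 4\rangle}(s;h_1,h_2,l_1,l_2,\alpha_1,\alpha_2,\beta)=s^{-1}(s-q^{h_1+1/2}t_1)(s-q^{h_2+1/2}t_2)T_s^{-1}+q^{\alpha_1+\alpha_2}s^{-1}(s-q^{l_1-1/2}t_1)(s-q^{l_2-1/2}t_2)T_s-\{(q^{\alpha_1}+q^{\alpha_2})s+q^{(h_1+h_2+l_1+l_2+\alpha_1+\alpha_2)/2}(q^{\beta/2}+q^{-\beta/2})t_1t_2s^{-1}\}$. Polynomials: given $(h''_1,h''_2,l''_1,l''_2,\alpha''_1,\alpha''_2,\beta'')$ and $N$, put $\lambda''_1=(h''_1+h''_2-l''_1-l''_2-\alpha''_1-\alpha''_2-\beta''+2)/2$, $x''_n=t_1t_2q^{1-n+h''_1+h''_2-\lambda''_1}(1-q^{n})(1-q^{n-\beta''})$, $y''_n=q^{3/2-n-\lambda''_1}(q^{h''_1}t_1+q^{h''_2}t_2)+q^{n-3/2+\lambda''_1+\alpha''_1+\alpha''_2}(q^{l''_1}t_1+q^{l''_2}t_2)$,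 $z''_n=q^{2-n-\lambda''_1}(1-q^{n-2+\lambda''_1+\alpha''_1})(1-q^{n-2+\lambda''_1+\alpha''_2})$; $c_{-1}=0$, $c_0=1$, $c_n(E'')x''_n=c_{n-1}(E'')(E''+y''_n)-c_{n-2}(E'')z''_n$ ($1\le n\le N$), $c(E'')=x''_1\cdots x''_N[c_N(E'')(E''+y''_{N+1})-c_{N-1}(E'')z''_{N+1}]$. *)

From Stdlib Require Import Reals.
From Coquelicot Require Export Coquelicot.
Open Scope C_scope.

Definition Cexp (z : C) : C :=
  (exp (Re z) * cos (Im z), exp (Re z) * sin (Im z))%R.

Definition Cnat (n : nat) : C := RtoC (INR n).

(* q^a := exp (a * L) where L is a fixed branch of log q (Cexp L = q). *)
Definition qpow (L a : C) : C := Cexp (a * L).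

(* s^a := exp (a * lg s), where lg is a fixed branch of log with
   lg (q s) = L + lg s, so that (q s)^a = q^a s^a. *)
Definition spow (lg : C -> C) (a s : C) : C := Cexp (a * lg s).

Fixpoint Cpown (x : C) (n : nat) : C :=
  match n with O => RtoC 1 | S m => x * Cpown x m end.

Fixpoint qpoch (q a : C) (n : nat) : C :=
  match n with O => RtoC 1 | S m => qpoch q a m * (RtoC 1 - a * Cpown q m) end.

Definition qpoch_inf (q a : C) : C :=
  (real (Lim_seq (fun n => Re (qpoch q a n))), real (Lim_seq (fun n => Im (qpoch q a n)))).

(* The operator A^<4>(s; h1,h2,l1,l2,al1,al2,be) applied to g at s;
   T_s^{-1} g (s) = g (s / q), T_s g (s) = g (q s). *)
Definition A4 (q L t1 t2 h1 h2 l1 l2 al1 al2 be : C) (g : C -> C) (s : C) : C :=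
  / s * (s - qpow L (h1 + /2) * t1) * (s - qpow L (h2 + /2) * t2) * g (s / q)
  + qpow L (al1 + al2) * / s * (s - qpow L (l1 - /2) * t1)
      * (s - qpow L (l2 - /2) * t2) * g (q * s)
  - ((qpow L al1 + qpow L al2) * s
     + qpow L ((h1 + h2 + l1 + l2 + al1 + al2) / 2)
       * (qpow L (be / 2) + qpow L (- be / 2)) * t1 * t2 * / s) * g s.

(* Coefficients of the three-term recurrence (parameters are the ''-ones). *)
Definition lam1 (h1 h2 l1 l2 al1 al2 be : C) : C :=
  (h1 + h2 - l1 - l2 - al1 - al2 - be + 2) / 2.

Definition xco (L t1 t2 h1 h2 l1 l2 al1 al2 be : C) (n : nat) : C :=
  t1 * t2 * qpow L (1 - Cnat n + h1 + h2 - lam1 h1 h2 l1 l2 al1 al2 be)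
  * (1 - qpow L (Cnat n)) * (1 - qpow L (Cnat n - be)).

Definition yco (L t1 t2 h1 h2 l1 l2 al1 al2 be : C) (n : nat) : C :=
  let lm := lam1 h1 h2 l1 l2 al1 al2 be in
  qpow L (3 / 2 - Cnat n - lm) * (qpow L h1 * t1 + qpow L h2 * t2)
  + qpow L (Cnat n - 3 / 2 + lm + al1 + al2) * (qpow L l1 * t1 + qpow L l2 * t2).

Definition zco (L t1 t2 h1 h2 l1 l2 al1 al2 be : C) (n : nat) : C :=
  let lm := lam1 h1 h2 l1 l2 al1 al2 be in
  qpow L (2 - Cnat n - lm) * (1 - qpow L (Cnat n - 2 + lm + al1))
  * (1 - qpow L (Cnat n - 2 + lm + al2)).

(* cpair n = (c_{n-1}(E), c_n(E)), with c_{-1} = 0, c_0 = 1 and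
   c_n x_n = c_{n-1} (E + y_n) - c_{n-2} z_n. *)
Fixpoint cpair (L t1 t2 h1 h2 l1 l2 al1 al2 be E : C) (n : nat) : C * C :=
  match n with
  | O => (RtoC 0, RtoC 1)
  | S m =>
      let p := cpair L t1 t2 h1 h2 l1 l2 al1 al2 be E m in
      (snd p,
       (snd p * (E + yco L t1 t2 h1 h2 l1 l2 al1 al2 be (S m))
        - fst p * zco L t1 t2 h1 h2 l1 l2 al1 al2 be (S m))
       / xco L t1 t2 h1 h2 l1 l2 al1 al2 be (S m))
  end.

Definition cn (L t1 t2 h1 h2 l1 l2 al1 al2 be E : C) (n : nat) : C :=
  snd (cpair L t1 t2 h1 h2 l1 l2 al1 al2 be E n).

Fixpoint xprod (L t1 t2 h1 h2 l1 l2 al1 al2 be : C) (N : nat) : C :=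
  match N with
  | O => RtoC 1
  | S m => xprod L t1 t2 h1 h2 l1 l2 al1 al2 be m * xco L t1 t2 h1 h2 l1 l2 al1 al2 be (S m)
  end.

Definition cpoly (L t1 t2 h1 h2 l1 l2 al1 al2 be : C) (N : nat) (E : C) : C :=
  let p := cpair L t1 t2 h1 h2 l1 l2 al1 al2 be E N in
  xprod L t1 t2 h1 h2 l1 l2 al1 al2 be N
  * (snd p * (E + yco L t1 t2 h1 h2 l1 l2 al1 al2 be (S N))
     - fst p * zco L t1 t2 h1 h2 l1 l2 al1 al2 be (S N)).

Fixpoint psum (c : nat -> C) (s : C) (N : nat) : C :=
  match N with
  | O => c O
  | S m => psum c s m + c (S m) * Cpown s (S m)
  end.

(* Each h_i is G_i P with P = sum_n c_n s^n and a gauge factor G_i made of a power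
   of s and a ratio of infinite q-Pochhammer symbols. Since (a;q)_oo = (1-a) (qa;q)_oo,
   the ratios G_i(s/q)/G_i(s) and G_i(qs)/G_i(s) are rational, and for both i they turn
   A4 - E into G_i/s times the same operator: A4 with h1 and l1 exchanged, conjugated by
   s^lam''. This operator maps s^n to s^n (z_(n+2) s^2 - (E + y_(n+1)) s + x_n), so on P
   the three-term recurrence of the c_n telescopes down to
   s^(N+1) (c_N z_(N+2) s - c(E) / (x_1 ... x_N)),
   which vanishes because z_(N+2) = 0 by the choice of N and c(E0) = 0. *)

From Stdlib Require Import Reals Lra Lia.
From Coquelicot Require Import Coquelicot.
Open Scope C_scope.

Lemma Cexp_add a b : Cexp (a + b) = Cexp a * Cexp b.
Proof.
  destruct a as [a1 a2], b as [b1 b2]. unfold Cexp; simpl.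
  rewrite exp_plus, cos_plus, sin_plus. unfold Cmult; simpl. f_equal; ring.
Qed.

Lemma Cexp_0 : Cexp 0 = 1.
Proof. unfold Cexp; simpl. rewrite exp_0, cos_0, sin_0. unfold RtoC. f_equal; ring. Qed.

Lemma Cexp_neq0 a : Cexp a <> 0.
Proof.
  intro H. apply (f_equal (fun z => Cexp (- a) * z)) in H.
  rewrite <- Cexp_add, Cplus_comm, Cplus_opp_r, Cexp_0, Cmult_0_r in H.
  injection H as H. lra.
Qed.

Lemma qpow_add L a b : qpow L (a + b) = qpow L a * qpow L b.
Proof. unfold qpow. rewrite <- Cexp_add. f_equal. ring. Qed.

Lemma qpow_neq0 L a : qpow L a <> 0.
Proof. apply Cexp_neq0. Qed.

Lemma qpow_0 L : qpow L 0 = 1.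
Proof. unfold qpow. rewrite Cmult_0_l. exact Cexp_0. Qed.

Lemma qpow_opp L a : qpow L (- a) = / qpow L a.
Proof.
  assert (H : qpow L a * qpow L (- a) = 1) by (rewrite <- qpow_add, Cplus_opp_r; apply qpow_0).
  transitivity (/ qpow L a * (qpow L a * qpow L (- a))); [field; apply qpow_neq0|].
  rewrite H. ring.
Qed.

Lemma Cnat_S n : Cnat (S n) = Cnat n + 1.
Proof. unfold Cnat. rewrite S_INR. unfold RtoC, Cplus; simpl. f_equal; ring. Qed.

Lemma qpow_Cnat L n : qpow L (Cnat n) = Cexp L ^ n.
Proof.
  induction n as [|n IH]; [apply qpow_0|].
  rewrite Cnat_S, qpow_add, IH, Cpow_S. unfold qpow. rewrite Cmult_1_l. ring.
Qed.

Lemma Cpow_div (s q : C) n : q <> 0 -> (s / q) ^ n = s ^ n / q ^ n.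
Proof. intro Hq. unfold Cdiv. rewrite Cpow_mult_l, Cpow_inv by exact Hq. reflexivity. Qed.

Lemma Cpow_neq1 (q : C) n : (Cmod q < 1)%R -> (1 <= n)%nat -> q ^ n <> 1.
Proof.
  intros Hq Hn H. apply (f_equal Cmod) in H. rewrite Cmod_pow, Cmod_1 in H.
  destruct (pow_lt_1_compat (Cmod q) n) as [_ Hlt];
    [split; [apply Cmod_ge_0 | exact Hq] | lia | lra].
Qed.

Lemma Re_minus a b : Re (a - b) = (Re a - Re b)%R.
Proof. destruct a, b; reflexivity. Qed.

Lemma Im_minus a b : Im (a - b) = (Im a - Im b)%R.
Proof. destruct a, b; reflexivity. Qed.

Lemma Im_le_Cmod c : (Rabs (Im c) <= Cmod c)%R.
Proof.
  unfold Cmod. rewrite <- sqrt_Rsqr_abs. apply sqrt_le_1_alt.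
  destruct c as [x y]. unfold Rsqr; simpl. nra.
Qed.

Lemma qpoch_S_shift q a n : qpoch q a (S n) = (1 - a) * qpoch q (q * a) n.
Proof.
  induction n as [|n IH]; [simpl; ring|].
  change (qpoch q a (S (S n))) with (qpoch q a (S n) * (1 - a * Cpown q (S n))).
  rewrite IH. simpl. ring.
Qed.

Section QPochhammer.
Variable q : C.
Hypothesis Hq : (Cmod q < 1)%R.

Lemma Cmod_qpoch_le a n : (Cmod (qpoch q a n) <= exp (Cmod a / (1 - Cmod q)))%R.
Proof.
  assert (Hpart : forall m,
    (Cmod (qpoch q a m) <= exp (Cmod a * (1 - Cmod q ^ m) / (1 - Cmod q)))%R).
  { induction m as [|m IH]; simpl.
    - rewrite Cmod_1, Rminus_diag, Rmult_0_r, Rdiv_0_l, exp_0. lra.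
    - rewrite Cmod_mult. change (Cpown q m) with (q ^ m).
      assert (H1 : (Cmod (1 - a * q ^ m) <= exp (Cmod a * Cmod q ^ m))%R).
      { eapply Rle_trans; [|apply exp_ineq1_le].
        unfold Cminus. eapply Rle_trans; [apply Cmod_triangle|].
        rewrite Cmod_opp, Cmod_mult, Cmod_pow, Cmod_1. lra. }
      replace (Cmod a * (1 - Cmod q * Cmod q ^ m) / (1 - Cmod q))%R
        with (Cmod a * (1 - Cmod q ^ m) / (1 - Cmod q) + Cmod a * Cmod q ^ m)%R
        by (field; lra).
      rewrite exp_plus. apply Rmult_le_compat; auto using Cmod_ge_0. }
  eapply Rle_trans; [apply Hpart|].
  assert (Hle : (Cmod a * (1 - Cmod q ^ n) / (1 - Cmod q) <= Cmod a / (1 - Cmod q))%R).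
  { pose proof (pow_le (Cmod q) n (Cmod_ge_0 q)). pose proof (Cmod_ge_0 a).
    unfold Rdiv. apply Rmult_le_compat_r; [apply Rlt_le, Rinv_0_lt_compat; lra | nra]. }
  destruct (Rle_lt_or_eq_dec _ _ Hle) as [Hlt | ->]; [apply Rlt_le, exp_increasing, Hlt | lra].
Qed.

(* The increments of (a;q)_n are O(|q|^n), so any real-linear 1-Lipschitz
   functional of it is a telescoping sum of an absolutely convergent series. *)
Lemma ex_lim_qpoch_component (f : C -> R) a :
  (forall z, Rabs (f z) <= Cmod z)%R -> (forall z w, f (z - w) = (f z - f w)%R) ->
  ex_finite_lim_seq (fun n => f (qpoch q a n)).
Proof.
  intros Hf Hlin.
  set (M := exp (Cmod a / (1 - Cmod q))).
  set (u := fun n => f (qpoch q a n)).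
  set (d := fun n => (u (S n) - u n)%R).
  assert (Hd : ex_series d).
  { apply (@ex_series_le R_AbsRing R_CompleteNormedModule d)
      with (b := fun n => (Cmod q ^ n * (M * Cmod a))%R).
    - intro n. change (norm (d n)) with (Rabs (d n)). unfold d, u.
      rewrite <- Hlin. simpl qpoch. change (Cpown q n) with (q ^ n).
      replace (qpoch q a n * (1 - a * q ^ n) - qpoch q a n)
        with (- (qpoch q a n * a * q ^ n)) by ring.
      eapply Rle_trans; [apply Hf|].
      rewrite Cmod_opp, !Cmod_mult, Cmod_pow.
      pose proof (Cmod_qpoch_le a n). pose proof (Cmod_ge_0 a).
      pose proof (pow_le (Cmod q) n (Cmod_ge_0 q)).
      replace (Cmod q ^ n * (M * Cmod a))%R with (M * Cmod a * Cmod q ^ n)%R by ring.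
      apply Rmult_le_compat_r; auto. apply Rmult_le_compat_r; auto.
    - apply ex_series_scal_r, ex_series_geom. rewrite Rabs_pos_eq; auto using Cmod_ge_0. }
  destruct Hd as [l Hl].
  assert (Hsum : forall n, sum_n d n = (u (S n) - u O)%R).
  { induction n as [|n IH]; [apply sum_O|].
    rewrite sum_Sn, IH. unfold d, plus; simpl. ring. }
  exists (l + u O)%R. apply is_lim_seq_incr_1.
  apply is_lim_seq_ext with (u := fun n => (sum_n d n + u O)%R).
  { intro n. rewrite Hsum. ring. }
  apply is_lim_seq_plus'; [exact Hl | apply is_lim_seq_const].
Qed.

Lemma qpoch_inf_shift a : qpoch_inf q a = (1 - a) * qpoch_inf q (q * a).
Proof.
  destruct (ex_lim_qpoch_component Re (q * a) re_le_Cmod Re_minus) as [x Hx].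
  destruct (ex_lim_qpoch_component Im (q * a) Im_le_Cmod Im_minus) as [y Hy].
  unfold qpoch_inf. rewrite (is_lim_seq_unique _ _ Hx), (is_lim_seq_unique _ _ Hy).
  assert (HRe : is_lim_seq (fun n => Re (qpoch q a n)) (Re (1 - a) * x - Im (1 - a) * y)%R).
  { apply is_lim_seq_incr_1.
    apply is_lim_seq_ext with (u := fun n =>
      (Re (1 - a) * Re (qpoch q (q * a) n) - Im (1 - a) * Im (qpoch q (q * a) n))%R).
    { intro n. rewrite qpoch_S_shift. reflexivity. }
    apply is_lim_seq_minus'; apply (is_lim_seq_scal_l _ _ (Finite _)); assumption. }
  assert (HIm : is_lim_seq (fun n => Im (qpoch q a n)) (Re (1 - a) * y + Im (1 - a) * x)%R).
  { apply is_lim_seq_incr_1.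
    apply is_lim_seq_ext with (u := fun n =>
      (Re (1 - a) * Im (qpoch q (q * a) n) + Im (1 - a) * Re (qpoch q (q * a) n))%R).
    { intro n. rewrite qpoch_S_shift. reflexivity. }
    apply is_lim_seq_plus'; apply (is_lim_seq_scal_l _ _ (Finite _)); assumption. }
  rewrite (is_lim_seq_unique _ _ HRe), (is_lim_seq_unique _ _ HIm). reflexivity.
Qed.

End QPochhammer.

(* [redA4 P s = s^(1-lam) ((A4 - E) (x |-> x^lam P x)) s], where A4 has the same
   parameters and lam = lam1 h1 h2 l1 l2 a1 a2 b. *)
Definition redA4 (q L t1 t2 h1 h2 l1 l2 a1 a2 b E : C) (P : C -> C) (s : C) : C :=
  let lam := lam1 h1 h2 l1 l2 a1 a2 b in
  qpow L (- lam) * (s - qpow L (h1 + /2) * t1) * (s - qpow L (h2 + /2) * t2) * P (s / q)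
  + qpow L (a1 + a2 + lam) * (s - qpow L (l1 - /2) * t1) * (s - qpow L (l2 - /2) * t2)
    * P (q * s)
  - ((qpow L a1 + qpow L a2) * s * s
     + qpow L ((h1 + h2 + l1 + l2 + a1 + a2) / 2) * (qpow L (b / 2) + qpow L (- b / 2))
       * t1 * t2
     + E * s) * P s.

(* [cnext m = c_m (E + y_(m+1)) - c_(m-1) z_(m+1)] is [x_(m+1) c_(m+1)] before the
   division, and [cpoly N E = xprod N * cnext N]. *)
Definition cnext (L t1 t2 h1 h2 l1 l2 a1 a2 b E : C) (m : nat) : C :=
  let p := cpair L t1 t2 h1 h2 l1 l2 a1 a2 b E m in
  snd p * (E + yco L t1 t2 h1 h2 l1 l2 a1 a2 b (S m))
  - fst p * zco L t1 t2 h1 h2 l1 l2 a1 a2 b (S m).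

(* Proves [qpow L e = product of qpow's and their inverses] by comparing exponents. *)
Ltac qpow_eq :=
  repeat match goal with x := _ |- _ => subst x end; unfold lam1, Cdiv;
  rewrite <- ?qpow_opp; repeat rewrite <- qpow_add; f_equal; rewrite ?Cnat_S; field.

Section Recurrence.
Variables (q L t1 t2 h1 h2 l1 l2 a1 a2 b E : C).
Hypothesis HL : Cexp L = q.

Local Notation X := (xco L t1 t2 h1 h2 l1 l2 a1 a2 b).
Local Notation Y := (yco L t1 t2 h1 h2 l1 l2 a1 a2 b).
Local Notation Z := (zco L t1 t2 h1 h2 l1 l2 a1 a2 b).
Local Notation c := (cn L t1 t2 h1 h2 l1 l2 a1 a2 b E).
Local Notation cnx := (cnext L t1 t2 h1 h2 l1 l2 a1 a2 b E).
Local Notation red := (redA4 q L t1 t2 h1 h2 l1 l2 a1 a2 b E).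

(* All exponents are half-integer combinations of h1, h2, l1, l2, a1, a2, b, 1
   and n, so every power of q is a monomial in the square roots below. *)
Lemma redA4_symbol (s : C) n :
  let lam := lam1 h1 h2 l1 l2 a1 a2 b in
  qpow L (- lam) * (s - qpow L (h1 + /2) * t1) * (s - qpow L (h2 + /2) * t2)
    * / qpow L (Cnat n)
  + qpow L (a1 + a2 + lam) * (s - qpow L (l1 - /2) * t1) * (s - qpow L (l2 - /2) * t2)
    * qpow L (Cnat n)
  - ((qpow L a1 + qpow L a2) * s * s
     + qpow L ((h1 + h2 + l1 + l2 + a1 + a2) / 2) * (qpow L (b / 2) + qpow L (- b / 2))
       * t1 * t2
     + E * s)
  = Z (S (S n)) * s * s - (E + Y (S n)) * s + X n.
Proof.
  intros lam. unfold zco, yco, xco. fold lam.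
  set (U1 := qpow L (h1 / 2)). set (U2 := qpow L (h2 / 2)).
  set (V1 := qpow L (l1 / 2)). set (V2 := qpow L (l2 / 2)).
  set (A1 := qpow L (a1 / 2)). set (A2 := qpow L (a2 / 2)).
  set (B := qpow L (b / 2)). set (R := qpow L (/ 2)). set (Q := qpow L (Cnat n)).
  assert (E1 : qpow L (- lam) = V1 * V2 * A1 * A2 * B * / U1 * / U2 * / R * / R) by qpow_eq.
  assert (E2 : qpow L (h1 + /2) = U1 * U1 * R) by qpow_eq.
  assert (E3 : qpow L (h2 + /2) = U2 * U2 * R) by qpow_eq.
  assert (E4 : qpow L (l1 - /2) = V1 * V1 * / R) by qpow_eq.
  assert (E5 : qpow L (l2 - /2) = V2 * V2 * / R) by qpow_eq.
  assert (E6 : qpow L (a1 + a2 + lam) = A1 * A2 * U1 * U2 * R * R * / V1 * / V2 * / B)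
    by qpow_eq.
  assert (E7 : qpow L a1 = A1 * A1) by qpow_eq.
  assert (E8 : qpow L a2 = A2 * A2) by qpow_eq.
  assert (E9 : qpow L ((h1 + h2 + l1 + l2 + a1 + a2) / 2) = U1 * U2 * V1 * V2 * A1 * A2)
    by qpow_eq.
  assert (E10 : qpow L (- b / 2) = / B) by qpow_eq.
  assert (E11 : qpow L (2 - Cnat (S (S n)) - lam)
    = V1 * V2 * A1 * A2 * B * / U1 * / U2 * / R * / R * / Q) by qpow_eq.
  assert (E12 : qpow L (Cnat (S (S n)) - 2 + lam + a1)
    = Q * U1 * U2 * R * R * A1 * / V1 * / V2 * / A2 * / B) by qpow_eq.
  assert (E13 : qpow L (Cnat (S (S n)) - 2 + lam + a2)
    = Q * U1 * U2 * R * R * A2 * / V1 * / V2 * / A1 * / B) by qpow_eq.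
  assert (E14 : qpow L (3 / 2 - Cnat (S n) - lam)
    = V1 * V2 * A1 * A2 * B * / U1 * / U2 * / R * / Q) by qpow_eq.
  assert (E15 : qpow L h1 = U1 * U1) by qpow_eq.
  assert (E16 : qpow L h2 = U2 * U2) by qpow_eq.
  assert (E17 : qpow L l1 = V1 * V1) by qpow_eq.
  assert (E18 : qpow L l2 = V2 * V2) by qpow_eq.
  assert (E19 : qpow L (Cnat (S n) - 3 / 2 + lam + a1 + a2)
    = Q * U1 * U2 * R * A1 * A2 * / V1 * / V2 * / B) by qpow_eq.
  assert (E20 : qpow L (1 - Cnat n + h1 + h2 - lam) = V1 * V2 * A1 * A2 * B * U1 * U2 * / Q)
    by qpow_eq.
  assert (E21 : qpow L (Cnat n - b) = Q * / B * / B) by qpow_eq.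
  rewrite E1, E2, E3, E4, E5, E6, E7, E8, E9, E10, E11, E12, E13, E14, E15, E16, E17,
    E18, E19, E20, E21.
  field. repeat split; apply qpow_neq0.
Qed.

Lemma redA4_Cpown n (s : C) :
  red (fun x => Cpown x n) s = Cpown s n * (Z (S (S n)) * s * s - (E + Y (S n)) * s + X n).
Proof.
  rewrite <- redA4_symbol. unfold redA4.
  change (Cpown ?x n) with (x ^ n).
  assert (Hq : q <> 0) by (rewrite <- HL; apply Cexp_neq0).
  rewrite Cpow_div, Cpow_mult_l, qpow_Cnat, HL by exact Hq.
  field. apply Cpow_nz, Hq.
Qed.

Lemma redA4_add_scale (f g : C -> C) (k s : C) :
  red (fun x => f x + k * g x) s = red f s + k * red g s.
Proof. unfold redA4. ring. Qed.

Lemma redA4_psum_cn (s : C) m :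
  (forall n, (1 <= n <= m)%nat -> X n <> 0) ->
  red (fun x => psum c x m) s = Cpown s (S m) * (c m * Z (S (S m)) * s - cnx m).
Proof.
  induction m as [|m IH]; intro Hx.
  - change (fun x => psum c x 0) with (fun x : C => Cpown x 0).
    rewrite redA4_Cpown.
    assert (Hx0 : X 0 = 0) by (unfold xco; rewrite qpow_0; ring).
    rewrite Hx0. unfold cnext, cn. simpl. ring.
  - change (fun x => psum c x (S m)) with (fun x => psum c x m + c (S m) * Cpown x (S m)).
    rewrite redA4_add_scale, redA4_Cpown, IH by (intros; apply Hx; lia).
    assert (HxS : X (S m) <> 0) by (apply Hx; lia).
    change (c (S m)) with (cnx m / X (S m)).
    change (cnx (S m)) with (cnx m / X (S m) * (E + Y (S (S m))) - c m * Z (S (S m))).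
    simpl Cpown. field. exact HxS.
Qed.

Lemma xprod_neq0 m :
  (forall n, (1 <= n <= m)%nat -> X n <> 0) -> xprod L t1 t2 h1 h2 l1 l2 a1 a2 b m <> 0.
Proof.
  induction m as [|m IH]; intro Hx; simpl.
  - apply C1_nz.
  - apply Cmult_neq_0; [apply IH; intros; apply Hx | apply Hx]; lia.
Qed.

Lemma redA4_psum_cn_eq0 N (s : C) :
  (forall n, (1 <= n <= N)%nat -> X n <> 0) -> Z (S (S N)) = 0 ->
  cpoly L t1 t2 h1 h2 l1 l2 a1 a2 b N E = 0 ->
  red (fun x => psum c x N) s = 0.
Proof.
  intros Hx Hz Hc. rewrite redA4_psum_cn, Hz by exact Hx.
  change (xprod L t1 t2 h1 h2 l1 l2 a1 a2 b N * cnx N = 0) in Hc.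
  pose proof (xprod_neq0 N Hx) as Hxp.
  set (xp := xprod L t1 t2 h1 h2 l1 l2 a1 a2 b N) in *.
  assert (Hcnx : cnx N = 0).
  { transitivity (/ xp * (xp * cnx N)); [field; exact Hxp | rewrite Hc; ring]. }
  rewrite Hcnx. ring.
Qed.

Lemma xco_neq0 n :
  (Cmod q < 1)%R -> t1 <> 0 -> t2 <> 0 -> (1 <= n)%nat -> qpow L (Cnat n - b) <> 1 -> X n <> 0.
Proof.
  intros Hq Ht1 Ht2 Hn Hb. unfold xco.
  repeat apply Cmult_neq_0; try apply qpow_neq0; try assumption;
    apply Cminus_eq_contra, not_eq_sym.
  - rewrite qpow_Cnat, HL. apply Cpow_neq1; assumption.
  - exact Hb.
Qed.

Lemma zco_SS_eq0 n : Cnat n + lam1 h1 h2 l1 l2 a1 a2 b + a2 = 0 -> Z (S (S n)) = 0.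
Proof.
  intro Hn. unfold zco.
  assert (He : Cnat (S (S n)) - 2 + lam1 h1 h2 l1 l2 a1 a2 b + a2 = 0)
    by (rewrite !Cnat_S, <- Hn; ring).
  rewrite He, qpow_0. ring.
Qed.

End Recurrence.

Lemma A4_gauge q L t1 t2 h1 h2 l1 l2 a1 a2 b E (G P : C -> C) (s : C) :
  let lam := lam1 l1 h2 h1 l2 a1 a2 b in
  s <> 0 ->
  G (s / q) * (s - qpow L (h1 + /2) * t1)
    = qpow L (- lam) * (s - qpow L (l1 + /2) * t1) * G s ->
  qpow L (a1 + a2) * G (q * s) * (s - qpow L (l1 - /2) * t1)
    = qpow L (a1 + a2 + lam) * (s - qpow L (h1 - /2) * t1) * G s ->
  A4 q L t1 t2 h1 h2 l1 l2 a1 a2 b (fun x => G x * P x) s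
  = E * (G s * P s) + G s / s * redA4 q L t1 t2 l1 h2 h1 l2 a1 a2 b E P s.
Proof.
  intros lam Hs Hdown Hup.
  set (e1 := qpow L (h1 + /2) * t1) in *. set (f1 := qpow L (l1 + /2) * t1) in *.
  set (e2 := qpow L (h2 + /2) * t2). set (c1 := qpow L (l1 - /2) * t1) in *.
  set (d1 := qpow L (h1 - /2) * t1) in *. set (c2 := qpow L (l2 - /2) * t2).
  assert (Hsplit :
    A4 q L t1 t2 h1 h2 l1 l2 a1 a2 b (fun x => G x * P x) s
    - (E * (G s * P s) + G s / s * redA4 q L t1 t2 l1 h2 h1 l2 a1 a2 b E P s)
    = / s * (s - e2) * P (s / q) * (G (s / q) * (s - e1) - qpow L (- lam) * (s - f1) * G s)
      + / s * (s - c2) * P (q * s)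
        * (qpow L (a1 + a2) * G (q * s) * (s - c1)
           - qpow L (a1 + a2 + lam) * (s - d1) * G s)).
  { unfold A4, redA4. fold lam.
    replace (qpow L ((l1 + h2 + h1 + l2 + a1 + a2) / 2))
      with (qpow L ((h1 + h2 + l1 + l2 + a1 + a2) / 2)) by (f_equal; field).
    fold e1 f1 e2 c1 d1 c2. field. exact Hs. }
  apply Ceq_minus. rewrite Hsplit, Hdown, Hup. ring.
Qed.

Definition gauge_in (q : C) (lg : C -> C) (a c d s : C) : C :=
  spow lg a s * qpoch_inf q (s / c) / qpoch_inf q (s / d).

Definition gauge_out (q : C) (lg : C -> C) (a c d s : C) : C :=
  spow lg a s * qpoch_inf q (c / s) / qpoch_inf q (d / s).

Section Gauge.
Variables (q L : C) (lg : C -> C).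
Hypothesis Hq : (Cmod q < 1)%R.
Hypothesis HL : Cexp L = q.
Hypothesis Hlg : forall s : C, s <> 0 -> lg (q * s) = L + lg s.

Lemma q_neq0 : q <> 0.
Proof. rewrite <- HL. apply Cexp_neq0. Qed.

Lemma qpow_half_shift h : qpow L (h + /2) = q * qpow L (h - /2).
Proof.
  rewrite <- HL. replace (Cexp L) with (qpow L 1) by (unfold qpow; f_equal; ring).
  rewrite <- qpow_add. f_equal. field.
Qed.

Lemma spow_mult_q a (s : C) : s <> 0 -> spow lg a (q * s) = qpow L a * spow lg a s.
Proof. intro Hs. unfold spow, qpow. rewrite <- Cexp_add, Hlg by exact Hs. f_equal. ring. Qed.

Lemma spow_div_q a (s : C) : s <> 0 -> spow lg a (s / q) = qpow L (- a) * spow lg a s.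
Proof.
  intro Hs. pose proof q_neq0 as Hq0.
  assert (Hsq : s / q <> 0).
  { intro H. apply Hs. replace s with (q * (s / q)) by (field; exact Hq0). rewrite H. ring. }
  replace s with (q * (s / q)) at 2 by (field; exact Hq0).
  rewrite spow_mult_q, qpow_opp by exact Hsq. field. apply qpow_neq0.
Qed.

Lemma gauge_in_down (a c d s : C) :
  s <> 0 -> c <> 0 -> d <> 0 -> qpoch_inf q (s / q / d) <> 0 ->
  gauge_in q lg a c d (s / q) * (s - q * d)
  = qpow L (- a) * (d / c) * (s - q * c) * gauge_in q lg a c d s.
Proof.
  intros Hs Hc Hd Hden. pose proof q_neq0 as Hq0. unfold gauge_in.
  rewrite spow_div_q by exact Hs.
  rewrite (qpoch_inf_shift q Hq (s / q / c)), (qpoch_inf_shift q Hq (s / q / d)) in *.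
  replace (q * (s / q / c)) with (s / c) by (field; auto).
  replace (q * (s / q / d)) with (s / d) in * by (field; auto).
  replace (s - q * c) with (- (q * c) * (1 - s / q / c)) by (field; auto).
  replace (s - q * d) with (- (q * d) * (1 - s / q / d)) by (field; auto).
  assert (H1 : 1 - s / q / d <> 0) by (intro H; apply Hden; rewrite H; ring).
  assert (H2 : qpoch_inf q (s / d) <> 0) by (intro H; apply Hden; rewrite H; ring).
  set (fc := 1 - s / q / c) in *. set (fd := 1 - s / q / d) in *.
  field. repeat split; auto.
Qed.

Lemma gauge_in_up (a c d s : C) :
  s <> 0 -> c <> 0 -> d <> 0 -> qpoch_inf q (s / d) <> 0 ->
  gauge_in q lg a c d (q * s) * (s - c)
  = qpow L a * (c / d) * (s - d) * gauge_in q lg a c d s.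
Proof.
  intros Hs Hc Hd Hden. unfold gauge_in.
  rewrite spow_mult_q by exact Hs.
  rewrite (qpoch_inf_shift q Hq (s / c)), (qpoch_inf_shift q Hq (s / d)) in *.
  replace (q * (s / c)) with (q * s / c) by (field; auto).
  replace (q * (s / d)) with (q * s / d) in * by (field; auto).
  replace (s - c) with (- c * (1 - s / c)) by (field; auto).
  replace (s - d) with (- d * (1 - s / d)) by (field; auto).
  assert (H1 : 1 - s / d <> 0) by (intro H; apply Hden; rewrite H; ring).
  assert (H2 : qpoch_inf q (q * s / d) <> 0) by (intro H; apply Hden; rewrite H; ring).
  set (fc := 1 - s / c) in *. set (fd := 1 - s / d) in *.
  field. repeat split; auto.
Qed.

Lemma gauge_out_down (a c d s : C) :
  s <> 0 -> qpoch_inf q (d / s) <> 0 ->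
  gauge_out q lg a c d (s / q) * (s - c) = qpow L (- a) * (s - d) * gauge_out q lg a c d s.
Proof.
  intros Hs Hden. pose proof q_neq0 as Hq0. unfold gauge_out.
  rewrite spow_div_q by exact Hs.
  rewrite (qpoch_inf_shift q Hq (c / s)), (qpoch_inf_shift q Hq (d / s)) in *.
  replace (q * (c / s)) with (c / (s / q)) by (field; auto).
  replace (q * (d / s)) with (d / (s / q)) in * by (field; auto).
  replace (s - c) with (s * (1 - c / s)) by (field; auto).
  replace (s - d) with (s * (1 - d / s)) by (field; auto).
  assert (H1 : 1 - d / s <> 0) by (intro H; apply Hden; rewrite H; ring).
  assert (H2 : qpoch_inf q (d / (s / q)) <> 0) by (intro H; apply Hden; rewrite H; ring).
  set (fc := 1 - c / s) in *. set (fd := 1 - d / s) in *.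
  field. repeat split; auto.
Qed.

Lemma gauge_out_up (a c d s : C) :
  s <> 0 -> qpoch_inf q (d / (q * s)) <> 0 ->
  gauge_out q lg a c d (q * s) * (s - d / q) = qpow L a * (s - c / q) * gauge_out q lg a c d s.
Proof.
  intros Hs Hden. pose proof q_neq0 as Hq0. unfold gauge_out.
  rewrite spow_mult_q by exact Hs.
  rewrite (qpoch_inf_shift q Hq (c / (q * s))), (qpoch_inf_shift q Hq (d / (q * s))) in *.
  replace (q * (c / (q * s))) with (c / s) by (field; auto).
  replace (q * (d / (q * s))) with (d / s) in * by (field; auto).
  replace (s - c / q) with (s * (1 - c / (q * s))) by (field; auto).
  replace (s - d / q) with (s * (1 - d / (q * s))) by (field; auto).
  assert (H1 : 1 - d / (q * s) <> 0) by (intro H; apply Hden; rewrite H; ring).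
  assert (H2 : qpoch_inf q (d / s) <> 0) by (intro H; apply Hden; rewrite H; ring).
  set (fc := 1 - c / (q * s)) in *. set (fd := 1 - d / (q * s)) in *.
  field. repeat split; auto.
Qed.

Lemma A4_gauge_in_eigen t1 t2 h1 h2 l1 l2 a1 a2 b E (P : C -> C) (c d s : C) :
  c = qpow L (l1 - /2) * t1 -> d = qpow L (h1 - /2) * t1 -> t1 <> 0 -> s <> 0 ->
  qpoch_inf q (s / q / d) <> 0 -> qpoch_inf q (s / d) <> 0 ->
  redA4 q L t1 t2 l1 h2 h1 l2 a1 a2 b E P s = 0 ->
  let G := gauge_in q lg (lam1 h1 h2 l1 l2 a1 a2 b) c d in
  A4 q L t1 t2 h1 h2 l1 l2 a1 a2 b (fun x => G x * P x) s = E * (G s * P s).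
Proof.
  intros -> -> Ht1 Hs Hdown Hup Hred G.
  assert (Hnz : forall h, qpow L h * t1 <> 0)
    by (intro; apply Cmult_neq_0; [apply qpow_neq0 | exact Ht1]).
  assert (Hshift : forall h, qpow L (h + /2) * t1 = q * (qpow L (h - /2) * t1))
    by (intro; rewrite qpow_half_shift; ring).
  rewrite (A4_gauge q L t1 t2 h1 h2 l1 l2 a1 a2 b E G P s), Hred; [ring | exact Hs | |]; unfold G.
  - rewrite !Hshift, gauge_in_down by auto.
    replace (qpow L (h1 - /2) * t1 / (qpow L (l1 - /2) * t1))
      with (qpow L (h1 - /2) * / qpow L (l1 - /2)) by (field; split; auto using qpow_neq0).
    do 2 f_equal. qpow_eq.
  - rewrite <- Cmult_assoc, gauge_in_up by auto.
    replace (qpow L (l1 - /2) * t1 / (qpow L (h1 - /2) * t1))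
      with (qpow L (l1 - /2) * / qpow L (h1 - /2)) by (field; split; auto using qpow_neq0).
    rewrite !Cmult_assoc. do 2 f_equal. qpow_eq.
Qed.

Lemma A4_gauge_out_eigen t1 t2 h1 h2 l1 l2 a1 a2 b E (P : C -> C) (nu c d s : C) :
  nu = lam1 l1 h2 h1 l2 a1 a2 b ->
  c = qpow L (h1 + /2) * t1 -> d = qpow L (l1 + /2) * t1 -> s <> 0 ->
  qpoch_inf q (d / s) <> 0 -> qpoch_inf q (d / (q * s)) <> 0 ->
  redA4 q L t1 t2 l1 h2 h1 l2 a1 a2 b E P s = 0 ->
  let G := gauge_out q lg nu c d in
  A4 q L t1 t2 h1 h2 l1 l2 a1 a2 b (fun x => G x * P x) s = E * (G s * P s).
Proof.
  intros Hnu -> -> Hs Hdown Hup Hred G. pose proof q_neq0 as Hq0.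
  assert (Hshift : forall h, qpow L (h - /2) * t1 = qpow L (h + /2) * t1 / q)
    by (intro; rewrite qpow_half_shift; field; exact Hq0).
  rewrite (A4_gauge q L t1 t2 h1 h2 l1 l2 a1 a2 b E G P s), Hred; [ring | exact Hs | |]; unfold G.
  - rewrite gauge_out_down, Hnu by auto. reflexivity.
  - rewrite !Hshift, <- Cmult_assoc, gauge_out_up, Hnu, (qpow_add L (a1 + a2)) by auto.
    ring.
Qed.

End Gauge.

Theorem theorem3p2
  (q L t1 t2 : C) (lg : C -> C)
  (h1' h2' l1' l2' al1' al2' be' : C) (N : nat) (E0 : C) :
  (0 < Cmod q < 1)%R ->
  Cexp L = q ->
  (forall s : C, s <> 0 -> Cexp (lg s) = s) ->
  (forall s : C, s <> 0 -> lg (q * s) = L + lg s) ->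
  t1 <> 0 -> t2 <> 0 ->
  (h1' - h2' - l1' + l2' + al1' - al2' + be' - 2) / 2 = Cnat N ->
  (forall n : nat, (1 <= n <= N)%nat -> be' <> Cnat n) ->
  (forall n : nat, (1 <= n <= N)%nat -> qpow L (Cnat n - be') <> 1) ->
  cpoly L t1 t2 l1' h2' h1' l2' al1' al2' be' N E0 = 0 ->
  let P := fun s => psum (cn L t1 t2 l1' h2' h1' l2' al1' al2' be' E0) s N in
  let h_1 := fun s =>
    spow lg ((h1' + h2' - l1' - l2' - al1' - al2' - be' + 2) / 2) s
    * qpoch_inf q (s / (qpow L (l1' - /2) * t1))
    / qpoch_inf q (s / (qpow L (h1' - /2) * t1)) * P s in
  let h_2 := fun s =>
    spow lg (- al2' - Cnat N) s
    * qpoch_inf q (qpow L (h1' + /2) * t1 / s)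
    / qpoch_inf q (qpow L (l1' + /2) * t1 / s) * P s in
  (forall s : C, s <> 0 ->
     qpoch_inf q (s / q / (qpow L (h1' - /2) * t1)) <> 0 ->
     qpoch_inf q (s / (qpow L (h1' - /2) * t1)) <> 0 ->
     qpoch_inf q (q * s / (qpow L (h1' - /2) * t1)) <> 0 ->
     A4 q L t1 t2 h1' h2' l1' l2' al1' al2' be' h_1 s = E0 * h_1 s) /\
  (forall s : C, s <> 0 ->
     qpoch_inf q (qpow L (l1' + /2) * t1 / (s / q)) <> 0 ->
     qpoch_inf q (qpow L (l1' + /2) * t1 / s) <> 0 ->
     qpoch_inf q (qpow L (l1' + /2) * t1 / (q * s)) <> 0 ->
     A4 q L t1 t2 h1' h2' l1' l2' al1' al2' be' h_2 s = E0 * h_2 s).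
Proof.
  intros Hq HL _ Hlg Ht1 Ht2 HN _ Hbe Hc P h_1 h_2.
  assert (Hq1 : (Cmod q < 1)%R) by lra.
  assert (Hred : forall s, redA4 q L t1 t2 l1' h2' h1' l2' al1' al2' be' E0 P s = 0).
  { intro s. apply redA4_psum_cn_eq0; [exact HL | | | exact Hc].
    - intros n Hn. apply xco_neq0 with q; auto. lia.
    - apply zco_SS_eq0. rewrite <- HN. unfold lam1. field. }
  split.
  - intros s Hs Hdown Hup _.
    exact (A4_gauge_in_eigen q L lg Hq1 HL Hlg t1 t2 h1' h2' l1' l2' al1' al2' be' E0 P
             _ _ s eq_refl eq_refl Ht1 Hs Hdown Hup (Hred s)).
  - intros s Hs _ Hdown Hup.
    apply (A4_gauge_out_eigen q L lg Hq1 HL Hlg t1 t2 h1' h2' l1' l2' al1' al2' be' E0 P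
             _ _ _ s); auto.
    rewrite <- HN. unfold lam1. field.
Qed.
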